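(* Fix integers $d\ge 2$, $k\ge 1$, a configuration $\omega\in\{0,1\}^{\mathbb{E}_{d,k}}$ and a set $A\subset[d]_\star$. Then the sets $\mathrm{prog}(e)$, $e\in\sigma(A)$, are pairwise disjoint. If moreover there exists $w\in[d]_\star$ such that $A\subset\{w\cdot v: v\in\bigcup_{n=0}^{k}[d]^n\}$, then: (i) for every long edge $e=\langle u,u\cdot r\rangle$ (with $r\in[d]^k$) such that $u\in\pi(A)$ and $u\cdot r\notin\pi(A)$, there exists a unique $e'\in\mathrm{trace}(e)\cap\sigma(A)$; (ii) $\Pi(A)$ is the disjoint union of $\pi(A)$ and the sets $\Pi(A)\cap\mathrm{prog}(e)$ for $e\in\sigma(A)$.
   Context: $[d]=\{1,\dots,d\}$, $[d]_\star=\bigcup_{n\ge0}[d]^n$ (finite sequences, $[d]^0=\{o\}$), with concatenation $u\cdot v$. The oriented graph $\mathbb{T}_{d,k}$ has vertex set $[d]_\star$ and edge set $\mathbb{E}_{d,k}=\mathbb{E}^{s}_{d,k}\cup\mathbb{E}^{\ell}_{d,k}$, where short edges are $\mathbb{E}^s_{d,k}=\{\langle u,u\cdot a\rangle:u\in[d]_\star,a\in[d]\}$ and long edges are $\mathbb{E}^\ell_{d,k}=\{\langle u,u\cdot r\rangle:u\in[d]_\star,r\in[d]^k\}$. An edge is open if $\omega$ equals 1 on it. The progeny of a vertex $u$ is $\mathrm{prog}(u)=\{u\cdot v:v\in[d]_\star\}$; for an edge $e=\langle u,v\rangle$, $\mathrm{prog}(e)=\mathrm{prog}(v)$. For a long edge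 $e=\langle u,u\cdot r\rangle$ with $r=(r_1,\dots,r_k)$, $\mathrm{trace}(e)$ is the set of $k$ short edges $\langle u,u\cdot r_1\rangle,\langle u\cdot r_1,u\cdot(r_1,r_2)\rangle,\dots,\langle u\cdot(r_1,\dots,r_{k-1}),u\cdot r\rangle$. $\Pi(A)$ is the set of vertices reachable from some vertex of $A$ by an oriented path of open edges (short or long; the empty path allowed, so $A\subseteq\Pi(A)$), and $\pi(A)$ is the set of vertices reachable from $A$ by an oriented path of open short edges only. A short edge $\langle u,v\rangle$ is a hub for $A$ if $\mathrm{prog}(v)\cap\pi(A)=\varnothing$ and $\mathrm{prog}(u)\cap\pi(A)\neq\varnothing$; $\sigma(A)$ denotes the set of hubs for $A$. *)

From mathcomp Require Import all_boot.
Set Implicit Arguments. Unset Strict Implicit. Unset Printing Implicit Defensive.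

(* Vertices of T_{d,k}: finite words over the alphabet 'I_d (labels 0..d-1,
   standing for [d] = {1..d}); concatenation is ++, the root o is [::]. *)
Definition vertex (d : nat) := seq 'I_d.
Definition opair (d : nat) := (vertex d * vertex d)%type.

Definition short_edge d (e : opair d) : Prop :=
  exists a : 'I_d, e.2 = e.1 ++ [:: a].
Definition long_edge d (k : nat) (e : opair d) : Prop :=
  exists r : seq 'I_d, size r = k /\ e.2 = e.1 ++ r.
Definition is_edge d k (e : opair d) : Prop := short_edge e \/ long_edge k e.

(* A configuration omega : {0,1}^{E_{d,k}} is given as a boolean function on
   oriented pairs; only its values on edges matter. *)
Definition config d := opair d -> bool.

Inductive reach (T : Type) (R : T -> T -> Prop) : T -> T -> Prop :=
| reach_refl x : reach R x x
| reach_step x y z : R x y -> reach R y z -> reach R x z.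

Definition open_step d k (omega : config d) (x y : vertex d) : Prop :=
  is_edge k (x, y) /\ omega (x, y) = true.
Definition open_short_step d (omega : config d) (x y : vertex d) : Prop :=
  short_edge (x, y) /\ omega (x, y) = true.

Definition PiA d k (omega : config d) (A : vertex d -> Prop) (v : vertex d) : Prop :=
  exists2 a, A a & reach (open_step k omega) a v.
Definition piA d (omega : config d) (A : vertex d -> Prop) (v : vertex d) : Prop :=
  exists2 a, A a & reach (open_short_step omega) a v.

Definition prog d (u : vertex d) (x : vertex d) : Prop := exists v, x = u ++ v.
Definition prog_edge d (e : opair d) := prog e.2.

(* hubs: sigma(A) *)
Definition hub d (omega : config d) (A : vertex d -> Prop) (e : opair d) : Prop :=
  short_edge e /\
  (forall x, prog e.2 x -> ~ piA omega A x) /\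
  (exists x, prog e.1 x /\ piA omega A x).

Definition trace d (u r : vertex d) (e : opair d) : Prop :=
  exists i, i < size r /\ e = (u ++ take i r, u ++ take i.+1 r).

From mathcomp Require Import all_boot zify.
From Stdlib Require Import Classical.

Set Implicit Arguments.
Unset Strict Implicit.
Unset Printing Implicit Defensive.

(* Progenies are the up-sets of the prefix order, so two of them are nested or
   disjoint; since the head of a hub has no progeny in pi(A) while its tail
   does, no hub head lies strictly below another.  Along a short-edge path from
   a in A every intermediate vertex is again in pi(A), so a vertex at least as
   long as every element of A whose progeny meets pi(A) lies in pi(A) itself.
   When A lies within depth k below w, this applies to the endpoint of a long
   edge leaving pi(A), and to every vertex of Pi(A) outside pi(A), which lies
   at depth >= k below its source in A; on the segment from a vertex of pi(A)
   to such a vertex, the last vertex whose progeny meets pi(A) is then the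
   tail of a hub. *)

Lemma progE d (u x : vertex d) : prog u x <-> prefix u x.
Proof. by split=> /prefixP. Qed.

Lemma prefix_total (T : eqType) (p q s : seq T) :
  prefix p s -> prefix q s -> size p <= size q -> prefix p q.
Proof.
rewrite !prefixE => /eqP Hp /eqP Hq le.
by rewrite -Hq take_takel // Hp.
Qed.

Lemma prefix_rcons_inv (T : eqType) (s t : seq T) x :
  prefix s (rcons t x) -> s = rcons t x \/ prefix s t.
Proof.
case/prefixP=> v; case/lastP: v => [|v c]; first by rewrite cats0; left.
by rewrite -rcons_cat => /rcons_inj [-> _]; right; apply: prefix_prefix.
Qed.

Lemma prefix_take_cat (T : eqType) (u r : seq T) m n :
  m <= n -> prefix (u ++ take m r) (u ++ take n r).
Proof. by move=> le; rewrite prefix_catr // eqxx -(take_takel _ le) prefix_take. Qed.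

Lemma reach_prefix (T : eqType) (R : seq T -> seq T -> Prop) (x y : seq T) :
  (forall x y, R x y -> prefix x y) -> reach R x y -> prefix x y.
Proof.
move=> Rpre; elim=> [z|z z' z'' /Rpre zz' _]; first exact: prefix_refl.
exact: prefix_trans.
Qed.

Lemma exists_crossing (P : nat -> Prop) n :
  P 0 -> ~ P n -> exists i, [/\ i < n, P i & ~ P i.+1].
Proof.
elim: n => [//|n IH] P0 nPn; case: (classic (P n)) => Pn; first by exists n.
by have [i [lt Pi nPi]] := IH P0 Pn; exists i; rewrite ltnS ltnW.
Qed.

Lemma take_short_edge d (u r : vertex d) i :
  i < size r -> short_edge (u ++ take i r, u ++ take i.+1 r).
Proof.
case: r => [//|c r] lt; exists (nth c (c :: r) i).
by rewrite (take_nth c lt) -cats1 catA.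
Qed.

Section Paths.
Variables (d : nat) (omega : config d).

Lemma open_short_step_prefix (x y : vertex d) :
  open_short_step omega x y -> prefix x y.
Proof. by move=> [[a /= ->] _]; apply: prefix_prefix. Qed.

Lemma open_step_prefix k (x y : vertex d) : open_step k omega x y -> prefix x y.
Proof. by move=> [[[a /= ->]|[r [_ /= ->]]] _]; apply: prefix_prefix. Qed.

Lemma reach_short_prefix (a y z : vertex d) :
  reach (open_short_step omega) a z -> prefix a y -> prefix y z ->
  reach (open_short_step omega) a y.
Proof.
move=> az; elim: az y => [x|x x' z' xx' x'z IH] y /prefixP [[|c v] ->];
  rewrite ?cats0 => yz; try exact: reach_refl.
  by move/size_prefix: yz; rewrite size_cat /=; lia.
have [[c' /= Ex'] _] := xx'; apply: reach_step xx' (IH _ _ yz).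
have x'z' : prefix x' z' := reach_prefix open_short_step_prefix x'z.
by apply: prefix_total x'z' yz _; rewrite Ex' !size_cat /=; lia.
Qed.

Lemma reach_open_cases k (a x : vertex d) :
  reach (open_step k omega) a x ->
  reach (open_short_step omega) a x \/ size a + k <= size x.
Proof.
elim=> [y|y y' z [[[c /= Ey]|[r /= [sr Ey]]] om] y'z IH].
- by left; exact: reach_refl.
- case: IH => [IH|IH]; last by right; move: IH; rewrite Ey size_cat /=; lia.
  by left; apply: reach_step IH; split=> //; exists c.
- right; have := size_prefix (reach_prefix (@open_step_prefix k) y'z).
  by rewrite Ey size_cat sr.
Qed.

Lemma piA_PiA k (A : vertex d -> Prop) x : piA omega A x -> PiA k omega A x.
Proof.
move=> [a Aa ax]; exists a => //; elim: ax => [y|y y' z [short om] _ IH].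
  exact: reach_refl.
by apply: reach_step IH; split=> //; left.
Qed.

End Paths.

Section Hubs.
Variables (d : nat) (omega : config d) (A : vertex d -> Prop).

Definition meets_piA (u : vertex d) : Prop := exists x, prog u x /\ piA omega A x.

Lemma hub_not_meets_piA e : hub omega A e -> ~ meets_piA e.2.
Proof. by move=> [_ [h _]] [x [px /(h x px)]]. Qed.

Lemma meets_piA_prefix u v : prefix u v -> meets_piA v -> meets_piA u.
Proof.
move=> uv [x [/progE vx pix]]; exists x; split=> //.
exact/progE/(prefix_trans uv).
Qed.

Lemma hub_prefix_eq e1 e2 :
  hub omega A e1 -> hub omega A e2 -> prefix e1.2 e2.2 -> e1 = e2.
Proof.
case: e1 e2 => [u1 v1] [u2 v2] h1 h2.
have [[a1 /= E1] _] := h1; have [[a2 /= E2] [_ M2]] := h2.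
rewrite /= E1 E2 !cats1 => /prefix_rcons_inv [/rcons_inj [-> ->] // | p12].
exfalso; apply: (hub_not_meets_piA h1).
by rewrite /= E1 cats1; apply: meets_piA_prefix M2.
Qed.

Lemma hub_prog_edge_eq e1 e2 x :
  hub omega A e1 -> hub omega A e2 -> prog_edge e1 x -> prog_edge e2 x -> e1 = e2.
Proof.
move=> h1 h2 /progE p1 /progE p2.
have [le|lt] := leqP (size e1.2) (size e2.2).
  exact/hub_prefix_eq/(prefix_total p1 p2).
exact/esym/hub_prefix_eq/(prefix_total p2 p1 (ltnW lt)).
Qed.

Lemma hub_on_segment u r :
  meets_piA u -> ~ meets_piA (u ++ r) ->
  exists i, i < size r /\ hub omega A (u ++ take i r, u ++ take i.+1 r).
Proof.
move=> Mu nMur.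
have M0 : meets_piA (u ++ take 0 r) by rewrite take0 cats0.
have nMr : ~ meets_piA (u ++ take (size r) r) by rewrite take_size.
have [i [lt Mi nMi]] :=
  exists_crossing (P := fun i => meets_piA (u ++ take i r)) M0 nMr.
exists i; split=> //; split; first exact: take_short_edge.
by split=> // x px pix; apply: nMi; exists x.
Qed.

Lemma trace_hub_unique u r e1 e2 :
  trace u r e1 -> trace u r e2 -> hub omega A e1 -> hub omega A e2 -> e1 = e2.
Proof.
move=> [i [_ ->]] [j [_ ->]] h1 h2.
have [le|lt] := leqP i j; first exact/hub_prefix_eq/prefix_take_cat.
exact/esym/hub_prefix_eq/prefix_take_cat/ltnW.
Qed.

Lemma piA_of_meets_piA y :
  (forall a, A a -> size a <= size y) -> meets_piA y -> piA omega A y.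
Proof.
move=> small [z [/progE yz [a Aa az]]]; exists a => //.
have az' : prefix a z := reach_prefix (@open_short_step_prefix d omega) az.
exact: reach_short_prefix az (prefix_total az' yz (small a Aa)) yz.
Qed.

Section Ball.
Variables (k : nat) (w : vertex d).
Hypothesis A_ball : forall a, A a -> exists v, size v <= k /\ a = w ++ v.

Lemma not_meets_piA_deep y :
  size w + k <= size y -> ~ piA omega A y -> ~ meets_piA y.
Proof.
move=> deep npy /(piA_of_meets_piA _) py; apply/npy/py => a /A_ball [v [sv ->]].
by move: deep; rewrite size_cat; lia.
Qed.

Lemma size_piA u : piA omega A u -> size w <= size u.
Proof.
move=> [a /A_ball [v [_ ->]] au].
apply: leq_trans (size_prefix (reach_prefix (@open_short_step_prefix d omega) au)).
by rewrite size_cat leq_addr.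
Qed.

Lemma long_edge_exit_hub u r :
  size r = k -> piA omega A u -> ~ piA omega A (u ++ r) ->
  exists i, i < size r /\ hub omega A (u ++ take i r, u ++ take i.+1 r).
Proof.
move=> sr pu npur; apply: hub_on_segment.
  by exists u; split=> //; apply/progE/prefix_refl.
by apply: not_meets_piA_deep npur; have := size_piA pu; rewrite size_cat sr; lia.
Qed.

Lemma PiA_exit_hub x :
  PiA k omega A x -> ~ piA omega A x -> exists e, hub omega A e /\ prog_edge e x.
Proof.
move=> [a Aa ax] npx.
have [ax_short|deep] := reach_open_cases ax; first by exfalso; apply: npx; exists a.
have [t Ex] := prefixP (reach_prefix (@open_step_prefix d omega k) ax).
have Ma : meets_piA a.
  by exists a; split; [apply/progE/prefix_refl | exists a => //; apply: reach_refl].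
have nMat : ~ meets_piA (a ++ t).
  rewrite -Ex; apply: not_meets_piA_deep npx; apply: leq_trans deep.
  by have [v [_ ->]] := A_ball Aa; rewrite leq_add2r size_cat leq_addr.
have [i [_ h]] := hub_on_segment Ma nMat.
exists (a ++ take i t, a ++ take i.+1 t); split=> //.
by exists (drop i.+1 t); rewrite Ex /= -catA cat_take_drop.
Qed.

End Ball.
End Hubs.

Theorem lemma5 (d k : nat) (hd : 2 <= d) (hk : 1 <= k)
  (omega : config d) (A : vertex d -> Prop) :
  (forall e1 e2, hub omega A e1 -> hub omega A e2 -> e1 <> e2 ->
     forall x, prog_edge e1 x -> prog_edge e2 x -> False) /\
  ((exists w : vertex d, forall a, A a -> exists v, size v <= k /\ a = w ++ v) ->
     (forall u r : vertex d, size r = k ->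
        piA omega A u -> ~ piA omega A (u ++ r) ->
        exists! e', trace u r e' /\ hub omega A e') /\
     (forall x, PiA k omega A x <->
        (piA omega A x \/ exists e, hub omega A e /\ PiA k omega A x /\ prog_edge e x)) /\
     (forall e, hub omega A e -> forall x, prog_edge e x -> ~ piA omega A x)).
Proof.
split=> [e1 e2 h1 h2 ne x p1 p2|[w A_ball]].
  exact/ne/(hub_prog_edge_eq h1 h2 p1 p2).
split; [|split].
- move=> u r sr pu npur.
  have [i [lt h]] := long_edge_exit_hub A_ball sr pu npur.
  have tr : trace u r (u ++ take i r, u ++ take i.+1 r) by exists i.
  exists (u ++ take i r, u ++ take i.+1 r); split=> // e' [tr' h'].
  exact: trace_hub_unique tr tr' h h'.
- move=> x; split=> [Px|[px|[e [_ [Px _]]]]]; [|exact: piA_PiA|by []].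
  have [px|npx] := classic (piA omega A x); [by left | right].
  by have [e [h px]] := PiA_exit_hub A_ball Px npx; exists e.
- by move=> e [_ [h _]].
Qed.
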